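(* Let $\alpha\in(0,1)$, $\theta=\alpha/2$, and let $0=t_0<\cdots<t_N=T$ be a time mesh with $\tau_k=t_k-t_{k-1}$ and $r_k=\tau_k/\tau_{k-1}$. Define $\beta_k:=\frac{2(1-\alpha/2)r_k}{1+\alpha+(1-\alpha/2)r_k}$ for $k\ge2$. Then, for $n\ge2$: (i) $I^{(n)}_{n-k}>(1+\beta_{k+1})\zeta^{(n)}_{n-k}$ for $1\le k\le n-1$, and $I^{(n)}_{n-k}-(1+\beta_{k+1})\zeta^{(n)}_{n-k}<I^{(n-1)}_{n-k-1}-(1+\beta_{k+1})\zeta^{(n-1)}_{n-k-1}$ for $1\le k\le n-2$; (ii) $J^{(n)}_{n-k}>3\zeta^{(n)}_{n-k}$ for $1\le k\le n-1$, and $J^{(n)}_{n-k}-3\zeta^{(n)}_{n-k}<J^{(n-1)}_{n-k-1}-3\zeta^{(n-1)}_{n-k-1}$ for $1\le k\le n-2$; (iii) $r_n\zeta^{(n)}_1<\frac{\alpha}{3(2-\alpha)}\varpi_n'(t_{n-1})$.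
   Context: $\omega_\beta(t)=t^{\beta-1}/\Gamma(\beta)$; $t_{n-\theta}=\theta t_{n-1}+(1-\theta)t_n$; $\varpi_n'(t):=\omega_{1-\alpha}(t_{n-\theta}-t)$ and $\varpi_n''(t):=\frac{d}{dt}\varpi_n'(t)$ for $0\le t<t_{n-\theta}$. For $1\le k\le n$: $\zeta^{(n)}_{n-k}:=\frac{2}{\tau_k^2}\int_{t_{k-1}}^{t_k}\big(s-\frac{t_{k-1}+t_k}{2}\big)\varpi_n'(s)\,ds$. For $1\le k\le n-1$: $$I^{(n)}_{n-k}:=\int_{t_{k-1}}^{t_k}\frac{t_k-t}{\tau_k}\varpi_n''(t)\,dt,\qquad J^{(n)}_{n-k}:=\int_{t_{k-1}}^{t_k}\frac{t-t_{k-1}}{\tau_k}\varpi_n''(t)\,dt.$$ *)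

From Stdlib Require Import Reals.
From Coquelicot Require Import Coquelicot.
Open Scope R_scope.

Definition Gamma (x : R) : R :=
  RInt_gen (fun s => Rpower s (x - 1) * exp (- s)) (at_right 0) (Rbar_locally p_infty).

Definition omega (beta t : R) : R := Rpower t (beta - 1) / Gamma beta.

Definition tau (t : nat -> R) (k : nat) : R := t k - t (k - 1)%nat.
Definition rr (t : nat -> R) (k : nat) : R := tau t k / tau t (k - 1)%nat.

Definition tnth (theta : R) (t : nat -> R) (n : nat) : R :=
  theta * t (n - 1)%nat + (1 - theta) * t n.

Definition varpi1 (alpha : R) (t : nat -> R) (n : nat) (s : R) : R :=
  omega (1 - alpha) (tnth (alpha / 2) t n - s).

Definition varpi2 (alpha : R) (t : nat -> R) (n : nat) (s : R) : R :=
  Derive (varpi1 alpha t n) s.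

(* zeta^{(n)}_{n-k}, indexed here by (n, k) *)
Definition zeta (alpha : R) (t : nat -> R) (n k : nat) : R :=
  2 / (tau t k) ^ 2 *
  RInt (fun s => (s - (t (k - 1)%nat + t k) / 2) * varpi1 alpha t n s) (t (k - 1)%nat) (t k).

(* I^{(n)}_{n-k} and J^{(n)}_{n-k}, indexed by (n, k) *)
Definition Icoef (alpha : R) (t : nat -> R) (n k : nat) : R :=
  RInt (fun s => (t k - s) / tau t k * varpi2 alpha t n s) (t (k - 1)%nat) (t k).

Definition Jcoef (alpha : R) (t : nat -> R) (n k : nat) : R :=
  RInt (fun s => (s - t (k - 1)%nat) / tau t k * varpi2 alpha t n s) (t (k - 1)%nat) (t k).

Definition betak (alpha : R) (t : nat -> R) (k : nat) : R :=
  2 * (1 - alpha / 2) * rr t k / (1 + alpha + (1 - alpha / 2) * rr t k).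

From Stdlib Require Import Reals Lra Lia Psatz.
From Coquelicot Require Import Coquelicot.
Open Scope R_scope.

(* Write a = t_(k-1), b = t_k, h = tau_k, T = t_(n-theta) > b and c = 1 / Gamma (1 - alpha).
   Integrating zeta by parts turns the three coefficients into integrals of polynomials against
   the kernel c alpha (T - s)^(-alpha-1) over [a, b]:
     I - (1 + beta) zeta = c alpha / h^2 * int (b - s) (h - (1 + beta) (s - a)) (T - s)^(-alpha-1),
     J - 3 zeta          = c alpha / h^2 * int (s - a) (3 (s - a) - 2 h) (T - s)^(-alpha-1),
     zeta                = c alpha / h^2 * int (s - a) (b - s) (T - s)^(-alpha-1).
   Such an integral is positive as soon as adding the derivative of Psi(s) (T - s)^(-g), for a
   polynomial Psi vanishing at a and b, makes the integrand pointwise positive. For J the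
   polynomial is itself such a derivative; for I a multiple of (s - a) (b - s)^2 (times
   T - b + (b - s) / 3 for the lowered exponent) works as soon as
   beta (alpha + 1) h <= (2 - beta) (T - b), which the definition of beta_(k+1) guarantees.
   Going from n - 1 to n increases T, and the T-derivative of such an integral is -g times the
   same integral with the exponent lowered by one, again positive by a certificate: this gives
   the monotonicity claims. Part (iii) bounds the kernel by its value at b. Finally c > 0
   requires the improper integral defining Gamma (1 - alpha) to converge; the primitive of its
   integrand is Cauchy at 0 and at infinity because its increments are dominated by those of
   s^x / x and of -e^(-s). *)

(** * Power kernels and Riemann integrals *)

Lemma Rpower_gt_0 (x e : R) : 0 < Rpower x e.
Proof. apply exp_pos. Qed.

Lemma Rpower_pred (x e : R) : 0 < x -> Rpower x e = x * Rpower x (e - 1).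
Proof.
  intros Hx. replace e with (1 + (e - 1)) at 1 by ring.
  rewrite Rpower_plus, Rpower_1 by exact Hx. reflexivity.
Qed.

Lemma is_derive_Rpower (e x : R) : 0 < x ->
  is_derive (fun y => Rpower y e) x (e * Rpower x (e - 1)).
Proof.
  intros Hx. unfold Rpower. auto_derive; [exact Hx |].
  replace ((e - 1) * ln x) with (e * ln x + - ln x) by ring.
  rewrite exp_plus, exp_Ropp, exp_ln by exact Hx. field. lra.
Qed.

Lemma is_derive_Rpower_sub (T e s : R) : s < T ->
  is_derive (fun y => Rpower (T - y) e) s (- e * Rpower (T - s) (e - 1)).
Proof.
  intros Hs. unfold Rpower. auto_derive; [lra |].
  replace ((e - 1) * ln (T - s)) with (e * ln (T - s) + - ln (T - s)) by ring.
  rewrite exp_plus, exp_Ropp, exp_ln by lra. change (T + - s) with (T - s). field. lra.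
Qed.

Lemma is_derive_Rpower_shift (t e u : R) : t < u ->
  is_derive (fun z => Rpower (z - t) e) u (e * Rpower (u - t) (e - 1)).
Proof.
  intros Hu. unfold Rpower. auto_derive; [lra |].
  replace ((e - 1) * ln (u - t)) with (e * ln (u - t) + - ln (u - t)) by ring.
  rewrite exp_plus, exp_Ropp, exp_ln by lra. change (u + - t) with (u - t). field. lra.
Qed.

Lemma is_derive_Rmult (f g : R -> R) (x df dg : R) :
  is_derive f x df -> is_derive g x dg -> is_derive (fun y => f y * g y) x (df * g x + f x * dg).
Proof. intros Hf Hg. exact (is_derive_mult f g x df dg Hf Hg Rmult_comm). Qed.

Lemma continuous_Rpower_sub (T e s : R) : s < T ->
  continuous (fun y => Rpower (T - y) e) s.
Proof.
  intros Hs. apply (@ex_derive_continuous R_AbsRing R_NormedModule).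
  eexists. apply is_derive_Rpower_sub, Hs.
Qed.

Lemma continuous_mul_Rpower_sub (p : R -> R) (T e s : R) : continuous p s -> s < T ->
  continuous (fun y => p y * Rpower (T - y) e) s.
Proof.
  intros Hp Hs. apply (continuous_mult p (fun y => Rpower (T - y) e)); [exact Hp |].
  apply continuous_Rpower_sub, Hs.
Qed.

Lemma ex_RInt_continuous_le (f : R -> R) (a b : R) : a <= b ->
  (forall s, a <= s <= b -> continuous f s) -> ex_RInt f a b.
Proof.
  intros Hab Hf. apply (@ex_RInt_continuous R_CompleteNormedModule). intros s Hs.
  rewrite Rmin_left, Rmax_right in Hs by exact Hab. apply Hf, Hs.
Qed.

Lemma RInt_antiderivative (F f : R -> R) (a b : R) : a <= b ->
  (forall s, a <= s <= b -> is_derive F s (f s)) ->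
  (forall s, a <= s <= b -> continuous f s) ->
  RInt f a b = F b - F a.
Proof.
  intros Hab HF Hf. apply is_RInt_unique, (is_RInt_derive F f);
    intros s Hs; rewrite Rmin_left, Rmax_right in Hs by exact Hab; auto.
Qed.

Lemma RInt_ext_R (f g : R -> R) (a b : R) : a <= b ->
  (forall s, a < s < b -> f s = g s) -> RInt f a b = RInt g a b.
Proof.
  intros Hab Hfg. apply RInt_ext. intros s Hs.
  rewrite Rmin_left, Rmax_right in Hs by exact Hab. apply Hfg, Hs.
Qed.

Lemma RInt_scal_R (f : R -> R) (a b k : R) : ex_RInt f a b ->
  RInt (fun s => k * f s) a b = k * RInt f a b.
Proof. exact (RInt_scal f a b k). Qed.

Lemma RInt_sub_scal (f g : R -> R) (a b k : R) : ex_RInt f a b -> ex_RInt g a b ->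
  RInt f a b - k * RInt g a b = RInt (fun s => f s - k * g s) a b.
Proof.
  intros Hf Hg.
  assert (Hscal := RInt_scal_R g a b k Hg).
  assert (Hminus : RInt (fun s => f s - k * g s) a b = RInt f a b - RInt (fun s => k * g s) a b)
    by exact (RInt_minus f _ a b Hf (ex_RInt_scal g a b k Hg)).
  rewrite Hminus, Hscal. reflexivity.
Qed.

Ltac solve_poly_continuity :=
  intros; apply (@ex_derive_continuous R_AbsRing R_NormedModule); auto_derive; exact I.

Ltac solve_poly_derive := intros; auto_derive; [exact I | field].

Lemma RInt_midpoint_by_parts (phi dphi : R -> R) (a b : R) : a <= b ->
  (forall s, a <= s <= b -> is_derive phi s (dphi s)) ->
  (forall s, a <= s <= b -> continuous dphi s) ->
  2 * RInt (fun s => (s - (a + b) / 2) * phi s) a b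
  = RInt (fun s => (s - a) * (b - s) * dphi s) a b.
Proof.
  intros Hab Hphi Hdphi.
  assert (Hmid : forall s, a <= s <= b -> continuous (fun s => (s - (a + b) / 2) * phi s) s).
  { intros s Hs. apply (continuous_mult (fun s => s - (a + b) / 2)); [solve_poly_continuity |].
    apply (@ex_derive_continuous R_AbsRing R_NormedModule). eexists. now apply Hphi. }
  assert (Hbubble : forall s, a <= s <= b -> continuous (fun s => (s - a) * (b - s) * dphi s) s).
  { intros s Hs. apply (continuous_mult (fun s => (s - a) * (b - s)));
      [solve_poly_continuity | now apply Hdphi]. }
  assert (Hparts : RInt (fun s => (s - a) * (b - s) * dphi s - 2 * ((s - (a + b) / 2) * phi s)) a b
                   = 0 :> R).
  { rewrite (RInt_antiderivative (fun s => (s - a) * (b - s) * phi s));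
      [cbv beta; ring | exact Hab | |].
    - intros s Hs. cbv beta.
      replace ((s - a) * (b - s) * dphi s - 2 * ((s - (a + b) / 2) * phi s))
        with (((b - s) - (s - a)) * phi s + (s - a) * (b - s) * dphi s) by field.
      apply (is_derive_Rmult (fun s => (s - a) * (b - s)) phi);
        [auto_derive; [exact I | ring] | now apply Hphi].
    - intros s Hs. apply (continuous_minus (fun s => (s - a) * (b - s) * dphi s));
        [now apply Hbubble | apply (continuous_scal_r 2 (fun s => (s - (a + b) / 2) * phi s))].
      now apply Hmid. }
  rewrite <- RInt_sub_scal in Hparts; [lra | |]; apply ex_RInt_continuous_le; assumption.
Qed.

(** * Positivity and monotonicity of kernel integrals *)

(* [Psi (T - s)^(-g)] vanishes at both ends and, by the last hypothesis, its derivative stays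
   below the integrand. *)
Lemma RInt_power_weight_gt_0 (p Psi dPsi : R -> R) (a b T g : R) :
  a < b -> b < T ->
  (forall s, a <= s <= b -> continuous p s) ->
  (forall s, a <= s <= b -> is_derive Psi s (dPsi s)) ->
  (forall s, a <= s <= b -> continuous dPsi s) ->
  Psi a = 0 -> Psi b = 0 ->
  (forall s, a < s < b -> 0 < (T - s) * (p s - dPsi s) - g * Psi s) ->
  0 < RInt (fun s => p s * Rpower (T - s) (- g)) a b.
Proof.
  intros Hab HbT Hp HPsi HdPsi Ha Hb Hcert.
  set (dG := fun s => dPsi s * Rpower (T - s) (- g) + Psi s * (- - g * Rpower (T - s) (- g - 1))).
  assert (HdG : forall s, a <= s <= b ->
    is_derive (fun y => Psi y * Rpower (T - y) (- g)) s (dG s)).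
  { intros s Hs. apply (is_derive_Rmult Psi (fun y => Rpower (T - y) (- g)));
      [apply HPsi, Hs | apply is_derive_Rpower_sub; lra]. }
  assert (HdG_cont : forall s, a <= s <= b -> continuous dG s).
  { intros s Hs. apply (continuous_plus (fun y => dPsi y * Rpower (T - y) (- g))).
    - apply continuous_mul_Rpower_sub; [apply HdPsi, Hs | lra].
    - apply (continuous_mult Psi).
      + apply (@ex_derive_continuous R_AbsRing R_NormedModule). eexists. apply HPsi, Hs.
      + apply (continuous_scal_r (- - g) (fun y => Rpower (T - y) (- g - 1))).
        apply continuous_Rpower_sub. lra. }
  assert (HdG0 : RInt dG a b = 0 :> R).
  { rewrite (RInt_antiderivative _ dG a b) by (auto; lra). cbv beta. rewrite Ha, Hb. ring. }
  rewrite <- HdG0. apply RInt_lt; [exact Hab | | exact HdG_cont |].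
  - intros s Hs. apply continuous_mul_Rpower_sub; [apply Hp, Hs | lra].
  - intros s Hs. apply Rlt_0_minus. unfold dG.
    rewrite (Rpower_pred (T - s) (- g)) by lra.
    replace (_ - _) with (Rpower (T - s) (- g - 1) * ((T - s) * (p s - dPsi s) - g * Psi s))
      by ring.
    apply Rmult_lt_0_compat; [apply Rpower_gt_0 | apply Hcert, Hs].
Qed.

Lemma continuity_2d_pt_power_weight (p : R -> R) (e T s : R) : continuous p s -> s < T ->
  continuity_2d_pt (fun u v => p v * (e * Rpower (u - v) (e - 1))) T s.
Proof.
  intros Hp Hs.
  apply (continuity_2d_pt_mult (fun u v => p v) (fun u v => e * Rpower (u - v) (e - 1))).
  - apply (continuity_1d_2d_pt_comp p (fun u v => v)); [| apply continuity_2d_pt_id2].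
    apply continuity_pt_filterlim, Hp.
  - apply (continuity_1d_2d_pt_comp (fun z => e * Rpower z (e - 1)) (fun u v => u - v)).
    + change (continuity_pt (fun z => e * Rpower z (e - 1)) (T - s)).
      apply continuity_pt_filterlim.
      apply (@ex_derive_continuous R_AbsRing R_NormedModule (fun z => e * Rpower z (e - 1))).
      eexists. apply (is_derive_scal (fun z => Rpower z (e - 1)) (T - s) e).
      apply is_derive_Rpower. lra.
    + apply continuity_2d_pt_minus; [apply continuity_2d_pt_id1 | apply continuity_2d_pt_id2].
Qed.

Lemma is_derive_RInt_power_weight (p : R -> R) (a b e T : R) : a <= b -> b < T ->
  (forall s, a <= s <= b -> continuous p s) ->
  is_derive (fun T' => RInt (fun s => p s * Rpower (T' - s) e) a b) T
    (e * RInt (fun s => p s * Rpower (T - s) (e - 1)) a b).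
Proof.
  intros Hab HbT Hp.
  set (dz := fun u s => p s * (e * Rpower (u - s) (e - 1))).
  assert (Hdz : forall u s, s < u -> is_derive (fun z => p s * Rpower (z - s) e) u (dz u s)).
  { intros u s Hsu. apply (is_derive_scal (fun z => Rpower (z - s) e)).
    apply is_derive_Rpower_shift, Hsu. }
  assert (HT : locally T (fun y => b < y)) by exact (open_gt b T HbT).
  assert (Hint : forall y e', b < y -> ex_RInt (fun s => p s * Rpower (y - s) e') a b).
  { intros y e' Hy. apply ex_RInt_continuous_le; [exact Hab |]. intros s Hs.
    apply continuous_mul_Rpower_sub; [now apply Hp | lra]. }
  assert (E : e * RInt (fun s => p s * Rpower (T - s) (e - 1)) a b = RInt (dz T) a b).
  { rewrite <- (RInt_scal (fun s => p s * Rpower (T - s) (e - 1))) by now apply Hint.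
    apply RInt_ext. intros s _. unfold dz, scal; simpl; unfold mult; simpl. ring. }
  rewrite E.
  replace (RInt (dz T) a b) with (RInt (fun s => Derive (fun z => p s * Rpower (z - s) e) T) a b).
  2:{ apply RInt_ext. intros s Hs. rewrite Rmin_left, Rmax_right in Hs by lra.
      apply is_derive_unique, Hdz. lra. }
  apply (is_derive_RInt_param (fun u s => p s * Rpower (u - s) e)).
  - apply (filter_imp (fun y => b < y)); [| exact HT].
    intros y Hy s Hs. rewrite Rmin_left, Rmax_right in Hs by lra.
    eexists. apply Hdz. lra.
  - intros s Hs. rewrite Rmin_left, Rmax_right in Hs by lra.
    apply (continuity_2d_pt_ext_loc dz).
    + exists (mkposreal ((T - b) / 2) ltac:(lra)). intros u v Hu Hv. simpl in Hu, Hv.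
      apply Rabs_lt_between' in Hu. apply Rabs_lt_between' in Hv.
      symmetry. apply is_derive_unique, Hdz. lra.
    + apply continuity_2d_pt_power_weight; [apply Hp | ]; lra.
  - exact (filter_imp _ _ (fun y Hy => Hint y e Hy) HT).
Qed.

Lemma RInt_power_weight_decreasing (p : R -> R) (a b g T1 T2 : R) :
  a <= b -> b < T1 -> T1 < T2 -> 0 < g ->
  (forall s, a <= s <= b -> continuous p s) ->
  (forall T, T1 <= T <= T2 -> 0 < RInt (fun s => p s * Rpower (T - s) (- g - 1)) a b) ->
  RInt (fun s => p s * Rpower (T2 - s) (- g)) a b
  < RInt (fun s => p s * Rpower (T1 - s) (- g)) a b.
Proof.
  intros Hab HbT1 HT12 Hg Hp Hpos. apply Ropp_lt_cancel.
  apply (incr_function_le (fun T => - RInt (fun s => p s * Rpower (T - s) (- g)) a b) T1 T2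
           (fun T => - (- g * RInt (fun s => p s * Rpower (T - s) (- g - 1)) a b)));
    simpl; [| | lra | exact HT12 | lra].
  - intros T HT1 HT2.
    apply (is_derive_opp (fun T => RInt (fun s => p s * Rpower (T - s) (- g)) a b)).
    apply is_derive_RInt_power_weight; [exact Hab | lra | exact Hp].
  - intros T HT1 HT2. specialize (Hpos T (conj HT1 HT2)). nra.
Qed.

Lemma RInt_J_weight_gt_0 (a b T g : R) : a < b -> b < T -> 0 < g ->
  0 < RInt (fun s => (s - a) * (3 * (s - a) - 2 * (b - a)) * Rpower (T - s) (- g)) a b.
Proof.
  intros Hab HbT Hg.
  apply (RInt_power_weight_gt_0 _ (fun s => - ((s - a) ^ 2 * (b - s)))
           (fun s => (s - a) * (3 * (s - a) - 2 * (b - a))));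
    [exact Hab | exact HbT | solve_poly_continuity | solve_poly_derive | solve_poly_continuity
    | ring | ring | intros s Hs].
  replace (_ - _) with (g * (s - a) ^ 2 * (b - s)) by ring.
  apply Rmult_lt_0_compat; [apply Rmult_lt_0_compat; [lra | apply pow_lt] |]; lra.
Qed.

Lemma I_certificate_slack (beta g h d : R) : 0 < g -> 0 < h -> 0 < d -> 0 <= beta ->
  beta * g * h <= (2 - beta) * d -> 0 <= 2 * ((1 + beta) / (g * h + 3 * d)) * d - beta.
Proof.
  intros Hg Hh Hd Hbeta Hadm.
  replace (_ - _) with (((2 - beta) * d - beta * g * h) / (g * h + 3 * d)) by (field; nra).
  apply Rmult_le_pos; [lra | left; apply Rinv_0_lt_compat; nra].
Qed.

(* In both certificates below, [K] solves [d (1 + beta - 3 K d) = g h K]; this cancels the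
   term of the certificate that is linear in [b - s] and leaves a sum of nonnegative terms. *)
Lemma RInt_I_weight_gt_0 (a b T beta g : R) : a < b -> b < T -> 0 < g -> 0 <= beta ->
  beta * g * (b - a) <= (2 - beta) * (T - b) ->
  0 < RInt (fun s => (b - s) * ((b - a) - (1 + beta) * (s - a)) * Rpower (T - s) (- g)) a b.
Proof.
  intros Hab HbT Hg Hbeta Hadm.
  set (h := b - a) in *. set (d := T - b) in *.
  assert (Hh : 0 < h) by (unfold h; lra). assert (Hd : 0 < d) by (unfold d; lra).
  set (K := (1 + beta) / (g * h + 3 * d)).
  assert (HK : 0 < K) by (apply Rdiv_lt_0_compat; nra).
  assert (Hslack := I_certificate_slack beta g h d Hg Hh Hd Hbeta Hadm). fold K in Hslack.
  apply (RInt_power_weight_gt_0 _ (fun s => K * d * (s - a) * (b - s) ^ 2)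
           (fun s => K * d * ((b - s) ^ 2 - 2 * (s - a) * (b - s))));
    [exact Hab | exact HbT | solve_poly_continuity | solve_poly_derive | solve_poly_continuity
    | ring | ring | intros s Hs].
  replace (_ - _) with ((b - s) * ((2 * K * d - beta) * h * (d + (b - s))
                                  + K * g * (h + d) * (b - s) ^ 2))
    by (unfold K, h, d in *; field; nra).
  apply Rmult_lt_0_compat; [lra |]. apply Rplus_le_lt_0_compat.
  - apply Rmult_le_pos; [apply Rmult_le_pos |]; lra.
  - apply Rmult_lt_0_compat; [| apply pow_lt; lra].
    apply Rmult_lt_0_compat; [apply Rmult_lt_0_compat |]; lra.
Qed.

Lemma RInt_I_weight_succ_gt_0 (a b T beta g : R) : a < b -> b < T -> 1 / 3 < g -> 0 <= beta ->
  beta * g * (b - a) <= (2 - beta) * (T - b) ->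
  0 < RInt (fun s => (b - s) * ((b - a) - (1 + beta) * (s - a)) * Rpower (T - s) (- g - 1)) a b.
Proof.
  intros Hab HbT Hg Hbeta Hadm.
  set (h := b - a) in *. set (d := T - b) in *.
  assert (Hh : 0 < h) by (unfold h; lra). assert (Hd : 0 < d) by (unfold d; lra).
  set (K := (1 + beta) / (g * h + 3 * d)).
  assert (HK : 0 < K) by (apply Rdiv_lt_0_compat; nra).
  assert (Hslack := I_certificate_slack beta g h d ltac:(lra) Hh Hd Hbeta Hadm). fold K in Hslack.
  replace (- g - 1) with (- (g + 1)) by ring.
  apply (RInt_power_weight_gt_0 _ (fun s => K * (s - a) * (b - s) ^ 2 * (d + (b - s) / 3))
           (fun s => K * (d * ((b - s) ^ 2 - 2 * (s - a) * (b - s))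
                          + ((b - s) ^ 3 - 3 * (s - a) * (b - s) ^ 2) / 3)));
    [exact Hab | exact HbT | solve_poly_continuity | solve_poly_derive | solve_poly_continuity
    | ring | ring | intros s Hs].
  replace (_ - _) with ((b - s) * ((2 * K * d - beta) * h * (d + (b - s))
        + K * (b - s) ^ 2 * (2 * (g + 1) * (s - a) + (3 * g - 1) * ((b - s) + d)) / 3))
    by (unfold K, h, d in *; field; nra).
  apply Rmult_lt_0_compat; [lra |]. apply Rplus_le_lt_0_compat.
  - apply Rmult_le_pos; [apply Rmult_le_pos |]; lra.
  - apply Rdiv_lt_0_compat; [| lra].
    apply Rmult_lt_0_compat; [apply Rmult_lt_0_compat; [lra | apply pow_lt; lra] |].
    nra.
Qed.

Lemma RInt_bubble_weight_lt (a b T g : R) : a < b -> b < T -> 0 < g ->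
  RInt (fun s => (s - a) * (b - s) * Rpower (T - s) (- g)) a b
  < Rpower (T - b) (- g) * (b - a) ^ 3 / 6.
Proof.
  intros Hab HbT Hg.
  assert (Hbubble : RInt (fun s => (s - a) * (b - s) * Rpower (T - b) (- g)) a b
                    = Rpower (T - b) (- g) * (b - a) ^ 3 / 6 :> R).
  { rewrite (RInt_antiderivative
      (fun s => Rpower (T - b) (- g) * ((s - a) ^ 2 * (b - s) / 2 + (s - a) ^ 3 / 6))); 
      [field | lra | solve_poly_derive | solve_poly_continuity]. }
  rewrite <- Hbubble. apply RInt_lt; [exact Hab | solve_poly_continuity | |].
  - intros s Hs. apply continuous_mul_Rpower_sub; [solve_poly_continuity | lra].
  - intros s Hs. apply Rmult_lt_compat_l; [apply Rmult_lt_0_compat; lra |].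
    rewrite !Rpower_Ropp. apply Rinv_lt_contravar.
    + apply Rmult_lt_0_compat; apply Rpower_gt_0.
    + apply Rlt_Rpower_l; lra.
Qed.

(** * Positivity of the Gamma function *)

Lemma ex_filterlim_of_dominated_increments {F : (R -> Prop) -> Prop} {FF : ProperFilter F}
  (G B : R -> R) (P : R -> Prop) : F P ->
  (forall u v, P u -> P v -> u <= v -> Rabs (G v - G u) <= Rabs (B v - B u)) ->
  (exists l, filterlim B F (locally l)) -> exists l, filterlim G F (locally l).
Proof.
  intros HP Hdom HB. apply (@filterlim_locally_cauchy R R_CompleteSpace F FF). intros eps.
  destruct (proj2 (@filterlim_locally_cauchy R R_CompleteSpace F FF B) HB eps)
    as [Q [HQ HBQ]].
  exists (fun y => P y /\ Q y). split; [now apply filter_and |].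
  intros u v [Pu Qu] [Pv Qv]. specialize (HBQ u v Qu Qv).
  change (Rabs (G v - G u) < eps). change (Rabs (B v - B u) < eps) in HBQ.
  destruct (Rle_dec u v) as [Huv | Huv].
  - eapply Rle_lt_trans; [apply Hdom | exact HBQ]; auto.
  - rewrite Rabs_minus_sym. rewrite Rabs_minus_sym in HBQ.
    eapply Rle_lt_trans; [apply Hdom | exact HBQ]; auto; lra.
Qed.

Definition gamma_integrand (x s : R) : R := Rpower s (x - 1) * exp (- s).

Section GammaIntegrand.

Variable x : R.
Hypothesis Hx : 0 < x <= 1.

Let f := gamma_integrand x.
Let G (y : R) : R := RInt f 1 y.

Lemma gamma_integrand_gt_0 s : 0 < f s.
Proof. apply Rmult_lt_0_compat; [apply Rpower_gt_0 | apply exp_pos]. Qed.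

Lemma continuous_gamma_integrand s : 0 < s -> continuous f s.
Proof.
  intros Hs. apply (@ex_derive_continuous R_AbsRing R_NormedModule).
  unfold f, gamma_integrand, Rpower. auto_derive. exact Hs.
Qed.

Lemma ex_RInt_gamma_integrand u v : 0 < u -> 0 < v -> ex_RInt f u v.
Proof.
  intros Hu Hv. apply (@ex_RInt_continuous R_CompleteNormedModule). intros s Hs.
  apply continuous_gamma_integrand.
  assert (0 < Rmin u v) by (apply Rmin_glb_lt; assumption). lra.
Qed.

Lemma gamma_primitive_sub u v : 0 < u -> 0 < v -> G v - G u = RInt f u v.
Proof.
  intros Hu Hv. unfold G.
  assert (H := RInt_Chasles f 1 u v (ex_RInt_gamma_integrand 1 u ltac:(lra) Hu)
                 (ex_RInt_gamma_integrand u v Hu Hv)).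
  change (RInt f 1 u + RInt f u v = RInt f 1 v) in H. lra.
Qed.

Lemma RInt_gamma_integrand_ge_0 u v : 0 < u <= v -> 0 <= RInt f u v.
Proof.
  intros Huv. apply RInt_ge_0; [lra | apply ex_RInt_gamma_integrand; lra |].
  intros s _. left. apply gamma_integrand_gt_0.
Qed.

Lemma RInt_gamma_integrand_le_Rpower u v : 0 < u <= v ->
  RInt f u v <= (Rpower v x - Rpower u x) / x.
Proof.
  intros Huv.
  assert (Hcont : forall s, u <= s <= v -> continuous (fun s => Rpower s (x - 1)) s).
  { intros s Hs. apply (@ex_derive_continuous R_AbsRing R_NormedModule).
    eexists. apply is_derive_Rpower. lra. }
  apply Rle_trans with (RInt (fun s => Rpower s (x - 1)) u v).
  - apply RInt_le; [lra | apply ex_RInt_gamma_integrand; lra |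
                    apply ex_RInt_continuous_le; [lra | exact Hcont] |].
    intros s Hs. unfold f, gamma_integrand.
    rewrite <- (Rmult_1_r (Rpower s (x - 1))) at 2.
    apply Rmult_le_compat_l; [left; apply Rpower_gt_0 |].
    rewrite <- exp_0. left. apply exp_increasing. lra.
  - rewrite (RInt_antiderivative (fun s => / x * Rpower s x));
      [right; field; lra | lra | | exact Hcont].
    intros s Hs. replace (Rpower s (x - 1)) with (/ x * (x * Rpower s (x - 1))) by (field; lra).
    apply (is_derive_scal (fun s => Rpower s x)), is_derive_Rpower. lra.
Qed.

Lemma RInt_gamma_integrand_le_exp u v : 1 <= u <= v ->
  RInt f u v <= exp (- u) - exp (- v).
Proof.
  intros Huv.
  assert (Hcont : forall s, u <= s <= v -> continuous (fun s => exp (- s)) s).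
  { intros s _. apply (@ex_derive_continuous R_AbsRing R_NormedModule). auto_derive. exact I. }
  apply Rle_trans with (RInt (fun s => exp (- s)) u v).
  - apply RInt_le; [lra | apply ex_RInt_gamma_integrand; lra |
                    apply ex_RInt_continuous_le; [lra | exact Hcont] |].
    intros s Hs. unfold f, gamma_integrand.
    rewrite <- (Rmult_1_l (exp (- s))) at 2.
    apply Rmult_le_compat_r; [left; apply exp_pos |].
    unfold Rpower. assert (0 <= ln s) by (rewrite <- ln_1; apply ln_le; lra).
    destruct (Rle_lt_or_eq_dec ((x - 1) * ln s) 0) as [Hneg | Hzero]; [nra | | ].
    + left. rewrite <- exp_0 at 2. apply exp_increasing, Hneg.
    + rewrite Hzero, exp_0. lra.
  - rewrite (RInt_antiderivative (fun s => - exp (- s))); [right; ring | lra | | exact Hcont].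
    intros s _. auto_derive; [exact I | ring].
Qed.

Lemma at_right_0_positive : at_right 0 (fun y => 0 < y).
Proof. exists (mkposreal 1 Rlt_0_1). intros y _ Hy. exact Hy. Qed.

Lemma ex_lim_gamma_primitive_at_0 : exists l, filterlim G (at_right 0) (locally l).
Proof.
  apply (ex_filterlim_of_dominated_increments G (fun y => Rpower y x / x) (fun y => 0 < y)).
  - exact at_right_0_positive.
  - intros u v Hu Hv Huv. rewrite gamma_primitive_sub by assumption.
    rewrite Rabs_pos_eq by (apply RInt_gamma_integrand_ge_0; lra).
    eapply Rle_trans; [apply RInt_gamma_integrand_le_Rpower; lra |].
    replace (Rpower v x / x - Rpower u x / x) with ((Rpower v x - Rpower u x) / x) by (field; lra).
    apply Rle_abs.
  - eexists. apply (filterlim_comp _ _ _ (fun y => Rpower y x) (fun z => z / x) _ (locally 0)).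
    + apply (filterlim_comp _ _ _ (fun y => x * ln y) exp _ (Rbar_locally m_infty));
        [| exact is_lim_exp_m].
      apply (filterlim_comp _ _ _ ln (Rmult x) _ (Rbar_locally m_infty)); [exact is_lim_ln_0 |].
      assert (Hm : Rbar_mult x m_infty = m_infty).
      { apply is_Rbar_mult_unique, is_Rbar_mult_sym, is_Rbar_mult_m_infty_pos. simpl; lra. }
      rewrite <- Hm at 2. apply filterlim_Rbar_mult_l.
    + apply (@ex_derive_continuous R_AbsRing R_NormedModule). auto_derive. lra.
Qed.

Lemma ex_lim_gamma_primitive_at_infty : exists l, filterlim G (Rbar_locally p_infty) (locally l).
Proof.
  apply (ex_filterlim_of_dominated_increments G (fun y => - exp (- y)) (fun y => 1 <= y)).
  - exists 1. intros y Hy. lra.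
  - intros u v Hu Hv Huv. rewrite gamma_primitive_sub by lra.
    rewrite Rabs_pos_eq by (apply RInt_gamma_integrand_ge_0; lra).
    eapply Rle_trans; [apply RInt_gamma_integrand_le_exp; lra |].
    replace (- exp (- v) - - exp (- u)) with (exp (- u) - exp (- v)) by ring.
    apply Rle_abs.
  - eexists. apply (filterlim_comp _ _ _ (fun y => exp (- y)) Ropp _ (locally 0)).
    + apply (filterlim_comp _ _ _ Ropp exp _ (Rbar_locally m_infty)); [| exact is_lim_exp_m].
      exact (filterlim_Rbar_opp p_infty).
    + apply (@ex_derive_continuous R_AbsRing R_NormedModule (fun z => - z)). auto_derive. exact I.
Qed.

Lemma is_derive_gamma_primitive y : 0 < y -> is_derive G y (f y).
Proof.
  intros Hy. apply (is_derive_RInt f G 1 y); [| apply continuous_gamma_integrand, Hy].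
  apply (filter_imp (fun z => 0 < z)); [| exact (open_gt 0 y Hy)].
  intros z Hz. apply (@RInt_correct R_CompleteNormedModule).
  apply ex_RInt_gamma_integrand; lra.
Qed.

Lemma is_RInt_gen_gamma_integrand la lb :
  filterlim G (at_right 0) (locally la) -> filterlim G (Rbar_locally p_infty) (locally lb) ->
  is_RInt_gen f (at_right 0) (Rbar_locally p_infty) (lb - la).
Proof.
  intros Hla Hlb.
  assert (Hpos : filter_prod (at_right 0) (Rbar_locally p_infty)
                   (fun ab => forall s, Rmin (fst ab) (snd ab) <= s -> 0 < s)).
  { apply (Filter_prod _ _ _ (fun y => 0 < y) (fun y => 0 < y));
      [exact at_right_0_positive | exists 0; auto |].
    intros u v Hu Hv s Hs. simpl in Hs.
    assert (0 < Rmin u v) by (apply Rmin_glb_lt; assumption). lra. }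
  apply (is_RInt_gen_ext (Derive G)).
  - refine (filter_imp _ _ _ Hpos). intros ab H s Hs.
    apply is_derive_unique, is_derive_gamma_primitive, H. lra.
  - apply is_RInt_gen_Derive; [| | exact Hla | exact Hlb];
      refine (filter_imp _ _ _ Hpos); intros ab H s Hs; specialize (H s (proj1 Hs)).
    + eexists. apply is_derive_gamma_primitive, H.
    + apply (continuous_ext_loc _ f); [| apply continuous_gamma_integrand, H].
      apply (filter_imp (fun z => 0 < z)); [| exact (open_gt 0 s H)].
      intros z Hz. symmetry. apply is_derive_unique, is_derive_gamma_primitive, Hz.
Qed.

Lemma gamma_primitive_limits_lt la lb :
  filterlim G (at_right 0) (locally la) -> filterlim G (Rbar_locally p_infty) (locally lb) ->
  la < lb.
Proof.
  intros Hla Hlb.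
  assert (Hla_le : la <= G (1 / 2)).
  { apply (filterlim_le (F := at_right 0) G (fun _ => G (1 / 2)) la (G (1 / 2)));
      [| exact Hla | apply filterlim_const].
    destruct (open_lt (1 / 2) 0 ltac:(lra)) as [eps Heps]. exists eps. intros y Hy Hy0.
    specialize (Heps y Hy). simpl in Heps.
    assert (H := gamma_primitive_sub y (1 / 2) Hy0 ltac:(lra)).
    assert (0 <= RInt f y (1 / 2)) by (apply RInt_gamma_integrand_ge_0; lra). lra. }
  assert (Hlb_ge : 0 <= lb).
  { apply (filterlim_le (F := Rbar_locally p_infty) (fun _ => 0) G 0 lb);
      [| apply filterlim_const | exact Hlb].
    exists 1. intros y Hy. apply RInt_gamma_integrand_ge_0. lra. }
  assert (Hhalf : G (1 / 2) < 0).
  { assert (H := gamma_primitive_sub (1 / 2) 1 ltac:(lra) ltac:(lra)).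
    assert (H1 : G 1 = 0) by exact (RInt_point 1 f).
    assert (0 < RInt f (1 / 2) 1).
    { apply RInt_gt_0; [lra | intros; apply gamma_integrand_gt_0 |].
      intros s Hs. apply continuous_gamma_integrand. lra. }
    lra. }
  lra.
Qed.

End GammaIntegrand.

Lemma Gamma_gt_0 (x : R) : 0 < x <= 1 -> 0 < Gamma x.
Proof.
  intros Hx.
  destruct (ex_lim_gamma_primitive_at_0 x Hx) as [la Hla].
  destruct (ex_lim_gamma_primitive_at_infty x Hx) as [lb Hlb].
  unfold Gamma. change (fun s => Rpower s (x - 1) * exp (- s)) with (gamma_integrand x).
  rewrite (is_RInt_gen_unique _ _ (is_RInt_gen_gamma_integrand x la lb Hla Hlb)).
  apply Rlt_0_minus, (gamma_primitive_limits_lt x la lb Hla Hlb).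
Qed.

(** * The coefficients on the mesh *)

Lemma beta_admissible (alpha D h d : R) : 0 < alpha -> 0 <= D -> D * h <= d ->
  2 * D / (1 + alpha + D) * (alpha + 1) * h <= (2 - 2 * D / (1 + alpha + D)) * d.
Proof.
  intros Halpha HD Hd. apply Rminus_le.
  replace (_ - _) with (2 * (alpha + 1) * (D * h - d) / (1 + alpha + D)) by (field; lra).
  apply Rmult_le_0_r; [nra | left; apply Rinv_0_lt_compat; lra].
Qed.

Lemma varpi1_eq (alpha : R) (t : nat -> R) (m : nat) (s : R) :
  varpi1 alpha t m s = / Gamma (1 - alpha) * Rpower (tnth (alpha / 2) t m - s) (- alpha).
Proof. unfold varpi1, omega. replace (1 - alpha - 1) with (- alpha) by ring. unfold Rdiv. ring. Qed.

Lemma is_derive_varpi1 (alpha : R) (t : nat -> R) (m : nat) (s : R) : s < tnth (alpha / 2) t m ->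
  is_derive (varpi1 alpha t m) s
    (/ Gamma (1 - alpha) * alpha * Rpower (tnth (alpha / 2) t m - s) (- (alpha + 1))).
Proof.
  intros Hs. eapply is_derive_ext; [intros y; symmetry; apply varpi1_eq |].
  replace (/ Gamma (1 - alpha) * alpha * Rpower (tnth (alpha / 2) t m - s) (- (alpha + 1)))
    with (/ Gamma (1 - alpha) * (- - alpha * Rpower (tnth (alpha / 2) t m - s) (- alpha - 1)))
    by (replace (- alpha - 1) with (- (alpha + 1)) by ring; ring).
  apply (is_derive_scal (fun y => Rpower (tnth (alpha / 2) t m - y) (- alpha))).
  apply is_derive_Rpower_sub, Hs.
Qed.

Lemma varpi2_eq (alpha : R) (t : nat -> R) (m : nat) (s : R) : s < tnth (alpha / 2) t m ->
  varpi2 alpha t m s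
  = / Gamma (1 - alpha) * alpha * Rpower (tnth (alpha / 2) t m - s) (- (alpha + 1)).
Proof. intros Hs. apply is_derive_unique, is_derive_varpi1, Hs. Qed.

Section Coefficients.

Variables (alpha : R) (t : nat -> R) (m k : nat).
Hypothesis Hab : t (k - 1)%nat < t k.
Hypothesis HbT : t k < tnth (alpha / 2) t m.

Local Notation a := (t (k - 1)%nat).
Local Notation b := (t k).
Local Notation c := (/ Gamma (1 - alpha)).
Local Notation w s := (Rpower (tnth (alpha / 2) t m - s) (- (alpha + 1))).

Lemma ex_RInt_kernel (p : R -> R) : (forall s, a <= s <= b -> continuous p s) ->
  ex_RInt (fun s => p s * w s) a b.
Proof.
  intros Hp. apply ex_RInt_continuous_le; [lra |]. intros s Hs.
  apply continuous_mul_Rpower_sub; [now apply Hp | lra].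
Qed.

Lemma zeta_eq : zeta alpha t m k
  = c * alpha / tau t k ^ 2 * RInt (fun s => (s - a) * (b - s) * w s) a b.
Proof.
  assert (Hh : tau t k <> 0) by (unfold tau; lra).
  assert (Hparts := RInt_midpoint_by_parts (varpi1 alpha t m) (fun s => c * alpha * w s) a b
    ltac:(lra) ltac:(intros s Hs; apply is_derive_varpi1; lra)
    ltac:(intros s Hs; apply (continuous_scal_r (c * alpha) (fun s => w s));
          apply continuous_Rpower_sub; lra)).
  assert (Hscal : RInt (fun s => (s - a) * (b - s) * (c * alpha * w s)) a b
                  = c * alpha * RInt (fun s => (s - a) * (b - s) * w s) a b).
  { rewrite <- RInt_scal_R by (apply ex_RInt_kernel; solve_poly_continuity).
    apply RInt_ext_R; [lra |]. intros; ring. }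
  unfold zeta. cbv beta in Hparts. rewrite Hscal in Hparts.
  set (R1 := RInt (fun s => (s - (a + b) / 2) * varpi1 alpha t m s) a b) in *.
  replace (2 / tau t k ^ 2 * R1) with (2 * R1 / tau t k ^ 2) by (field; exact Hh).
  rewrite Hparts. unfold Rdiv. ring.
Qed.

Lemma RInt_varpi2_sub_zeta (p : R -> R) (C : R) : (forall s, a <= s <= b -> continuous p s) ->
  RInt (fun s => p s / tau t k * varpi2 alpha t m s) a b - C * zeta alpha t m k
  = c * alpha / tau t k ^ 2 * RInt (fun s => (tau t k * p s - C * ((s - a) * (b - s))) * w s) a b.
Proof.
  intros Hp.
  assert (Hh : tau t k <> 0) by (unfold tau; lra).
  assert (Hpw : ex_RInt (fun s => tau t k * p s * w s) a b).
  { apply ex_RInt_kernel. intros s Hs.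
    apply (continuous_scal_r (tau t k) p), Hp, Hs. }
  rewrite zeta_eq.
  rewrite (RInt_ext_R _ (fun s => c * alpha / tau t k ^ 2 * (tau t k * p s * w s))); [| lra |].
  2:{ intros s Hs. rewrite varpi2_eq by lra.
      (* hide [c] from [field], which would otherwise ask for [Gamma (1 - alpha) <> 0] *)
      generalize c. intros c'. field. exact Hh. }
  rewrite RInt_scal_R by exact Hpw.
  rewrite (RInt_ext_R (fun s => (tau t k * p s - C * ((s - a) * (b - s))) * w s)
             (fun s => tau t k * p s * w s - C * ((s - a) * (b - s) * w s)));
    [| lra | intros; ring].
  rewrite <- RInt_sub_scal; [ring | exact Hpw | apply ex_RInt_kernel; solve_poly_continuity].
Qed.

Lemma Icoef_sub_zeta (C : R) : Icoef alpha t m k - C * zeta alpha t m k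
  = c * alpha / tau t k ^ 2 * RInt (fun s => (b - s) * ((b - a) - C * (s - a)) * w s) a b.
Proof.
  etransitivity; [exact (RInt_varpi2_sub_zeta (fun s => b - s) C ltac:(solve_poly_continuity)) |].
  f_equal. apply RInt_ext_R; [lra |]. intros s _. unfold tau. ring.
Qed.

Lemma Jcoef_sub_zeta : Jcoef alpha t m k - 3 * zeta alpha t m k
  = c * alpha / tau t k ^ 2 * RInt (fun s => (s - a) * (3 * (s - a) - 2 * (b - a)) * w s) a b.
Proof.
  etransitivity; [exact (RInt_varpi2_sub_zeta (fun s => s - a) 3 ltac:(solve_poly_continuity)) |].
  f_equal. apply RInt_ext_R; [lra |]. intros s _. unfold tau. ring.
Qed.

End Coefficients.

Section Mesh.

Variables (alpha : R) (N : nat) (t : nat -> R).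
Hypothesis Halpha : 0 < alpha < 1.
Hypothesis Hmono : forall k, (k < N)%nat -> t k < t (S k).

Local Notation t_theta m := (tnth (alpha / 2) t m).

Lemma mesh_lt i j : (i < j)%nat -> (j <= N)%nat -> t i < t j.
Proof.
  intros Hij HjN. induction j as [| j IH]; [lia |].
  destruct (Nat.eq_dec i j) as [-> | Hne]; [apply Hmono; lia |].
  apply Rlt_trans with (t j); [apply IH; lia | apply Hmono; lia].
Qed.

Lemma mesh_le i j : (i <= j)%nat -> (j <= N)%nat -> t i <= t j.
Proof.
  intros Hij HjN. destruct (Nat.eq_dec i j) as [-> | Hne]; [lra |].
  left. apply mesh_lt; lia.
Qed.

Lemma tnth_sub_pred m : t_theta m - t (m - 1)%nat = (1 - alpha / 2) * (t m - t (m - 1)%nat).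
Proof. unfold tnth. ring. Qed.

Lemma mesh_lt_tnth m k : (1 <= m <= N)%nat -> (k <= m - 1)%nat -> t k < t_theta m.
Proof.
  intros Hm Hk. assert (t (m - 1)%nat < t m) by (apply mesh_lt; lia).
  assert (t k <= t (m - 1)%nat) by (apply mesh_le; lia).
  pose proof (tnth_sub_pred m). nra.
Qed.

Lemma tnth_pred_lt m : (2 <= m <= N)%nat -> t_theta (m - 1) < t_theta m.
Proof.
  intros Hm. unfold tnth. replace (m - 1 - 1)%nat with (m - 2)%nat by lia.
  assert (t (m - 2)%nat < t (m - 1)%nat) by (apply mesh_lt; lia).
  assert (t (m - 1)%nat < t m) by (apply mesh_lt; lia). nra.
Qed.

Lemma tau_succ_le_tnth m k : (1 <= m <= N)%nat -> (k <= m - 1)%nat ->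
  (1 - alpha / 2) * tau t (S k) <= t_theta m - t k.
Proof.
  intros Hm Hk. unfold tau. replace (S k - 1)%nat with k by lia.
  pose proof (tnth_sub_pred m).
  destruct (Nat.eq_dec (S k) m) as [<- | Hne].
  - replace (S k - 1)%nat with k in * by lia. lra.
  - assert (t (S k) <= t (m - 1)%nat) by (apply mesh_le; lia).
    assert (t k < t (S k)) by (apply Hmono; lia).
    assert (t (m - 1)%nat < t m) by (apply mesh_lt; lia). nra.
Qed.

Lemma betak_ge_0 k : (1 <= k)%nat -> (S k <= N)%nat -> 0 <= betak alpha t (S k).
Proof.
  intros Hk HkN. unfold betak, rr, tau. replace (S k - 1)%nat with k by lia.
  assert (t (k - 1)%nat < t k) by (apply mesh_lt; lia).
  assert (t k < t (S k)) by (apply Hmono; lia).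
  assert (0 <= (1 - alpha / 2) * ((t (S k) - t k) / (t k - t (k - 1)%nat))).
  { apply Rmult_le_pos; [lra | left; apply Rdiv_lt_0_compat; lra]. }
  apply Rmult_le_pos; [nra | left; apply Rinv_0_lt_compat; lra].
Qed.

Lemma betak_admissible k d : (1 <= k)%nat -> (S k <= N)%nat ->
  (1 - alpha / 2) * tau t (S k) <= d ->
  betak alpha t (S k) * (alpha + 1) * tau t k <= (2 - betak alpha t (S k)) * d.
Proof.
  intros Hk HkN Hd.
  assert (Hh : 0 < tau t k) by (unfold tau; apply Rlt_0_minus, mesh_lt; lia).
  assert (Hr : 0 <= rr t (S k)).
  { unfold rr. replace (S k - 1)%nat with k by lia. left. apply Rdiv_lt_0_compat; [| exact Hh].
    unfold tau. replace (S k - 1)%nat with k by lia. apply Rlt_0_minus, Hmono. lia. }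
  replace (betak alpha t (S k))
    with (2 * ((1 - alpha / 2) * rr t (S k)) / (1 + alpha + (1 - alpha / 2) * rr t (S k)))
    by (unfold betak, Rdiv; ring).
  apply beta_admissible; [lra | apply Rmult_le_pos; lra |].
  unfold rr. replace (S k - 1)%nat with k by lia.
  replace ((1 - alpha / 2) * (tau t (S k) / tau t k) * tau t k) with ((1 - alpha / 2) * tau t (S k))
    by (field; lra).
  exact Hd.
Qed.

Lemma coef_scale_gt_0 k : (1 <= k <= N)%nat -> 0 < / Gamma (1 - alpha) * alpha / tau t k ^ 2.
Proof.
  intros Hk.
  assert (0 < / Gamma (1 - alpha)) by (apply Rinv_0_lt_compat, Gamma_gt_0; lra).
  assert (0 < tau t k) by (unfold tau; apply Rlt_0_minus, mesh_lt; lia).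
  apply Rdiv_lt_0_compat; [nra | apply pow_lt; lra].
Qed.

Lemma Icoef_gt_zeta m k : (1 <= k <= m - 1)%nat -> (m <= N)%nat ->
  Icoef alpha t m k > (1 + betak alpha t (S k)) * zeta alpha t m k.
Proof.
  intros Hk Hm.
  assert (Hab : t (k - 1)%nat < t k) by (apply mesh_lt; lia).
  assert (HbT : t k < t_theta m) by (apply mesh_lt_tnth; lia).
  apply Rlt_0_minus. rewrite (Icoef_sub_zeta alpha t m k Hab HbT).
  apply Rmult_lt_0_compat; [apply coef_scale_gt_0; lia |].
  apply RInt_I_weight_gt_0; [exact Hab | exact HbT | lra | apply betak_ge_0; lia |].
  apply betak_admissible, tau_succ_le_tnth; lia.
Qed.

Lemma Icoef_sub_zeta_lt_pred m k : (1 <= k <= m - 2)%nat -> (m <= N)%nat ->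
  Icoef alpha t m k - (1 + betak alpha t (S k)) * zeta alpha t m k
  < Icoef alpha t (m - 1) k - (1 + betak alpha t (S k)) * zeta alpha t (m - 1) k.
Proof.
  intros Hk Hm.
  assert (Hab : t (k - 1)%nat < t k) by (apply mesh_lt; lia).
  assert (HbT1 : t k < t_theta (m - 1)) by (apply mesh_lt_tnth; lia).
  assert (HT12 := tnth_pred_lt m ltac:(lia)).
  assert (Hadm := tau_succ_le_tnth (m - 1) k ltac:(lia) ltac:(lia)).
  rewrite (Icoef_sub_zeta alpha t m k Hab ltac:(lra)), (Icoef_sub_zeta alpha t (m - 1) k Hab HbT1).
  apply Rmult_lt_compat_l; [apply coef_scale_gt_0; lia |].
  apply RInt_power_weight_decreasing;
    [lra | exact HbT1 | exact HT12 | lra | solve_poly_continuity |].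
  intros T HT. apply RInt_I_weight_succ_gt_0; [exact Hab | lra | lra | apply betak_ge_0; lia |].
  apply betak_admissible; [lia | lia | lra].
Qed.

Lemma Jcoef_gt_zeta m k : (1 <= k <= m - 1)%nat -> (m <= N)%nat ->
  Jcoef alpha t m k > 3 * zeta alpha t m k.
Proof.
  intros Hk Hm.
  assert (Hab : t (k - 1)%nat < t k) by (apply mesh_lt; lia).
  assert (HbT : t k < t_theta m) by (apply mesh_lt_tnth; lia).
  apply Rlt_0_minus. rewrite (Jcoef_sub_zeta alpha t m k Hab HbT).
  apply Rmult_lt_0_compat; [apply coef_scale_gt_0; lia |].
  apply RInt_J_weight_gt_0; [exact Hab | exact HbT | lra].
Qed.

Lemma Jcoef_sub_zeta_lt_pred m k : (1 <= k <= m - 2)%nat -> (m <= N)%nat ->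
  Jcoef alpha t m k - 3 * zeta alpha t m k < Jcoef alpha t (m - 1) k - 3 * zeta alpha t (m - 1) k.
Proof.
  intros Hk Hm.
  assert (Hab : t (k - 1)%nat < t k) by (apply mesh_lt; lia).
  assert (HbT1 : t k < t_theta (m - 1)) by (apply mesh_lt_tnth; lia).
  assert (HT12 := tnth_pred_lt m ltac:(lia)).
  rewrite (Jcoef_sub_zeta alpha t m k Hab ltac:(lra)), (Jcoef_sub_zeta alpha t (m - 1) k Hab HbT1).
  apply Rmult_lt_compat_l; [apply coef_scale_gt_0; lia |].
  apply RInt_power_weight_decreasing;
    [lra | exact HbT1 | exact HT12 | lra | solve_poly_continuity |].
  intros T HT. replace (- (alpha + 1) - 1) with (- (alpha + 2)) by ring.
  apply RInt_J_weight_gt_0; lra.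
Qed.

(* With the kernel replaced by its value at [b = t (n - 1)] the claim becomes an identity,
   because [t_theta n - b = (1 - alpha / 2) * tau t n]. *)
Lemma rr_zeta_lt n : (2 <= n <= N)%nat ->
  rr t n * zeta alpha t n (n - 1) < alpha / (3 * (2 - alpha)) * varpi1 alpha t n (t (n - 1)%nat).
Proof.
  intros Hn.
  assert (Hab : t (n - 1 - 1)%nat < t (n - 1)%nat) by (apply mesh_lt; lia).
  assert (HbT : t (n - 1)%nat < t_theta n) by (apply mesh_lt_tnth; lia).
  assert (Hbn : t (n - 1)%nat < t n) by (apply mesh_lt; lia).
  assert (Hc : 0 < / Gamma (1 - alpha)) by (apply Rinv_0_lt_compat, Gamma_gt_0; lra).
  assert (Hbubble := RInt_bubble_weight_lt _ _ _ (alpha + 1) Hab HbT ltac:(lra)).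
  rewrite (zeta_eq alpha t n (n - 1) Hab HbT), varpi1_eq.
  rewrite (Rpower_pred (t_theta n - t (n - 1)%nat) (- alpha)) by lra.
  replace (- alpha - 1) with (- (alpha + 1)) by ring.
  unfold rr. change (tau t (n - 1)) with (t (n - 1)%nat - t (n - 1 - 1)%nat).
  rewrite (tnth_sub_pred n) in *. unfold tau in *.
  set (a := t (n - 1 - 1)%nat) in *. set (b := t (n - 1)%nat) in *.
  set (P := Rpower ((1 - alpha / 2) * (t n - b)) (- (alpha + 1))) in *.
  apply Rlt_le_trans
    with ((t n - b) / (b - a) * (/ Gamma (1 - alpha) * alpha / (b - a) ^ 2) * (P * (b - a) ^ 3 / 6)).
  - rewrite Rmult_assoc. apply Rmult_lt_compat_l; [| apply Rmult_lt_compat_l; [| exact Hbubble]].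
    + apply Rdiv_lt_0_compat; lra.
    + apply Rdiv_lt_0_compat; [nra | apply pow_lt; lra].
  - right. generalize (/ Gamma (1 - alpha)). intros c. field. lra.
Qed.

End Mesh.

Theorem lemma4p3 (alpha T : R) (N : nat) (t : nat -> R)
  (Halpha : 0 < alpha < 1)
  (Ht0 : t 0%nat = 0) (HtN : t N = T)
  (Hmono : forall k : nat, (k < N)%nat -> t k < t (S k))
  (n : nat) (Hn2 : (2 <= n)%nat) (HnN : (n <= N)%nat) :
  (* (i) *)
  (forall k : nat, (1 <= k <= n - 1)%nat ->
     Icoef alpha t n k > (1 + betak alpha t (S k)) * zeta alpha t n k) /\
  (forall k : nat, (1 <= k <= n - 2)%nat ->
     Icoef alpha t n k - (1 + betak alpha t (S k)) * zeta alpha t n k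
     < Icoef alpha t (n - 1) k - (1 + betak alpha t (S k)) * zeta alpha t (n - 1) k) /\
  (* (ii) *)
  (forall k : nat, (1 <= k <= n - 1)%nat ->
     Jcoef alpha t n k > 3 * zeta alpha t n k) /\
  (forall k : nat, (1 <= k <= n - 2)%nat ->
     Jcoef alpha t n k - 3 * zeta alpha t n k
     < Jcoef alpha t (n - 1) k - 3 * zeta alpha t (n - 1) k) /\
  (* (iii) *)
  rr t n * zeta alpha t n (n - 1) < alpha / (3 * (2 - alpha)) * varpi1 alpha t n (t (n - 1)%nat).
Proof.
  repeat split.
  - intros k Hk. apply (Icoef_gt_zeta alpha N t Halpha Hmono); lia.
  - intros k Hk. apply (Icoef_sub_zeta_lt_pred alpha N t Halpha Hmono); lia.
  - intros k Hk. apply (Jcoef_gt_zeta alpha N t Halpha Hmono); lia.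
  - intros k Hk. apply (Jcoef_sub_zeta_lt_pred alpha N t Halpha Hmono); lia.
  - apply (rr_zeta_lt alpha N t Halpha Hmono). lia.
Qed.
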